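(* Let $n,t\ge1$ be integers and $b\ge0$ real. Consider the negative-fill variable-processor cup game on $n$ cups, starting from all fills $0$, played for $t$ rounds against a greedy emptier. The following are equivalent: (1) the filler can guarantee that after $t$ rounds at least one cup has fill $\ge b$; (2) the filler can guarantee that after $t$ rounds at least one cup has fill $\le -b$; (3) the filler can guarantee that after $t$ rounds at least one cup has fill $\ge b$ or at least one cup has fill $\le -b$.
   Context: Negative-fill variable-processor cup game: real fills $x_1,\dots,x_n$; in each round the filler chooses an integer $1\le p\le n$ and reals $a_i\in[0,1]$ with $\sum_i a_i=p$ and adds $a_i$ to cup $i$; then the emptier chooses $p$ distinct cups and subtracts exactly $1$ from each (fills may become negative). The greedy emptier always subtracts from the $p$ fullest cups after the filler's move. *)

From HB Require Import structures.
From mathcomp Require Import all_boot all_order all_algebra.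
From mathcomp Require Import reals.
Set Implicit Arguments. Unset Strict Implicit. Unset Printing Implicit Defensive.
Import Order.TTheory GRing.Theory Num.Theory.
Local Open Scope ring_scope.

Definition config (R : realType) (n : nat) := 'I_n -> R.

Definition valid_fill (R : realType) (n : nat) (p : nat) (a : 'I_n -> R) : Prop :=
  [/\ (1 <= p <= n)%N, (forall i, 0 <= a i <= 1) & \sum_(i < n) a i = p%:R].

Definition fill_cups (R : realType) (n : nat) (x a : config R n) : config R n :=
  fun i => x i + a i.

Definition greedy_choice (R : realType) (n : nat) (y : config R n) (p : nat)
  (S : {set 'I_n}) : Prop :=
  #|S| = p /\ (forall i j, i \in S -> j \notin S -> y j <= y i).

Definition empty_cups (R : realType) (n : nat) (y : config R n) (S : {set 'I_n})
  : config R n := fun i => y i - (i \in S)%:R.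

Fixpoint can_force (R : realType) (n : nat) (goal : config R n -> Prop)
  (k : nat) (x : config R n) : Prop :=
  match k with
  | 0 => goal x
  | k'.+1 => exists (p : nat) (a : config R n),
      valid_fill p a /\
      forall S : {set 'I_n}, greedy_choice (fill_cups x a) p S ->
        can_force goal k' (empty_cups (fill_cups x a) S)
  end.

Definition init_config (R : realType) (n : nat) : config R n := fun _ => 0.

From HB Require Import structures.
From mathcomp Require Import all_boot all_order all_algebra.
From mathcomp Require Import reals.
From mathcomp Require Import fingroup perm zify lra boolp.
Import Order.TTheory GRing.Theory Num.Theory.
Local Open Scope ring_scope.
Set Implicit Arguments. Unset Strict Implicit.

(* Two facts drive the proof.  First, greedy emptying is determined up to
   tie-breaking, and different tie-breaks produce configurations that differ by
   a permutation of the cups; so for a permutation-invariant goal the filler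
   forcing "A or B" already forces A or already forces B.  Second, the game is
   symmetric under x |-> -x: the filler answers a move (p, a) by (n - p, 1 - a),
   and the greedy emptier of the mirrored game empties exactly the complement
   of a greedy choice of the original one (a move with p = n is a no-op and is
   answered by itself). *)

Section CupGame.

Variables (R : realType) (n : nat).
Implicit Types (x y a : config R n) (g : config R n -> Prop).
Implicit Types (S : {set 'I_n}) (s : {perm 'I_n}).

Definition perm_invariant g := forall x s, g x -> g (x \o s).

Lemma exists_cup_perm_invariant (P : R -> Prop) :
  perm_invariant (fun x => exists i, P (x i)).
Proof. by move=> x s [i Pi]; exists (s^-1 i)%g; rewrite /= permKV. Qed.

Lemma sub_can_force g1 g2 :
  (forall x, g1 x -> g2 x) -> forall k x, can_force g1 k x -> can_force g2 k x.
Proof.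
move=> g12; elim=> [|k IHk] x /=; first exact: g12.
by case=> p [a [fill_a force]]; exists p, a; split=> // S /force /IHk.
Qed.

Lemma greedy_choice_exists y p : (p <= n)%N -> exists S, greedy_choice y p S.
Proof.
elim: p => [|p IHp] le_pn.
  by exists set0; split=> [|i j]; rewrite ?cards0 ?inE.
have [S [cardS greedyS]] := IHp (ltnW le_pn).
have /card_gt0P [j0 j0S] : (0 < #|~: S|)%N by have := cardsC S; rewrite card_ord; lia.
have [j jS max_j] := arg_maxP y j0S.
have {}jS : j \notin S by have : j \in ~: S := jS; rewrite inE.
exists (j |: S); split; first by rewrite cardsU1 jS cardS.
move=> i k; rewrite !inE negb_or => /orP[/eqP-> | iS] /andP[_ kS]; last exact: greedyS.
by apply: max_j; have : k \in ~: S by rewrite inE.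
Qed.

Lemma greedy_choice_comp y p S s :
  greedy_choice y p S -> greedy_choice (y \o s) p (s @^-1: S).
Proof.
case=> cardS greedyS; split; first by rewrite card_preimset //; apply: perm_inj.
by move=> i j; rewrite !inE; apply: greedyS.
Qed.

Lemma empty_cups_comp y S s : empty_cups (y \o s) (s @^-1: S) = empty_cups y S \o s.
Proof. by apply: funext => i; rewrite /empty_cups /= inE. Qed.

Lemma comp_permV y s : (y \o s) \o s^-1%g = y.
Proof. by apply: funext => i; rewrite /= permKV. Qed.

Lemma comp_tperm y i j : y i = y j -> y \o tperm i j = y.
Proof. by move=> yij; apply: funext => k /=; case: tpermP => // ->. Qed.

Lemma greedy_choice_tie y p S S' i j :
  greedy_choice y p S -> greedy_choice y p S' ->
  i \in S :\: S' -> j \in S' :\: S -> y i = y j.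
Proof.
case=> _ greedyS [_ greedyS']; rewrite !inE => /andP[iS' iS] /andP[jS jS'].
by apply/le_anti; rewrite (greedyS i j) ?(greedyS' j i).
Qed.

Lemma greedy_choice_eq y p S S' :
  greedy_choice y p S -> greedy_choice y p S' -> S' :\: S = set0 -> S' = S.
Proof.
case=> cardS _ [cardS' _] /eqP; rewrite setD_eq0 => sub_S'S.
by apply/eqP; rewrite eqEcard sub_S'S /= cardS cardS'.
Qed.

(* Induction on #|S' :\: S|: swapping a tied pair of cups moves S' one cup
   closer to S. *)
Lemma empty_cups_greedy_perm y p S S' :
  greedy_choice y p S -> greedy_choice y p S' ->
  exists s, empty_cups y S' = empty_cups y S \o s.
Proof.
move=> greedyS; move Hm: #|S' :\: S| => m; elim: m S' Hm => [|m IHm] S' cardD greedyS'.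
  have -> : S' = S.
    by apply: greedy_choice_eq greedyS greedyS' _; apply/eqP; rewrite -cards_eq0 cardD.
  by exists 1%g; apply: funext => i; rewrite /= perm1.
have /card_gt0P [j jD] : (0 < #|S' :\: S|)%N by rewrite cardD.
have /card_gt0P [i iD] : (0 < #|S :\: S'|)%N.
  case: greedyS greedyS' => cardS _ [cardS' _].
  by rewrite cardsD setIC cardS -cardS' -cardsD cardD.
have y_t : y \o tperm i j = y.
  by apply: comp_tperm; exact: greedy_choice_tie greedyS greedyS' iD jD.
pose S1 := tperm i j @^-1: S'.
have greedyS1 : greedy_choice y p S1 by rewrite -{1}y_t; apply: greedy_choice_comp.
have cardD1 : #|S1 :\: S| = m.
  suff -> : S1 :\: S = (S' :\: S) :\ j by rewrite (cardsD1 j) jD in cardD; case: cardD.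
  move: iD jD; rewrite !inE => /andP[iS' iS] /andP[jS jS'].
  apply/setP => k; rewrite !inE; case: tpermP => [->|->|/eqP ki /eqP kj].
  - by rewrite iS /= andbF.
  - by rewrite (negbTE iS') andbF eqxx.
  - by rewrite kj.
have [s1 E1] := IHm S1 cardD1 greedyS1.
have E1' : empty_cups y S1 = empty_cups y S' \o tperm i j.
  by rewrite -empty_cups_comp y_t.
exists (tperm i j * s1)%g; apply: funext => k.
have := congr1 (fun z => z (tperm i j k)) E1.
by rewrite E1' /= tpermK permM.
Qed.

Lemma can_force_perm g : perm_invariant g ->
  forall k x s, can_force g k x -> can_force g k (x \o s).
Proof.
move=> g_inv; elim=> [|k IHk] x s /=; first exact: g_inv.
case=> p [a [[p_bd a_bd sum_a] force]]; exists p, (a \o s); split.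
  split=> // [i |]; first exact: a_bd.
  by rewrite -sum_a; apply: esym; apply: reindex_inj; apply: perm_inj.
move=> S greedyS.
have := greedy_choice_comp (s^-1)%g (greedyS : greedy_choice (fill_cups x a \o s) p S).
rewrite comp_permV => /force /(IHk _ s); congr can_force.
by rewrite -empty_cups_comp; congr empty_cups; apply/setP => i; rewrite !inE permK.
Qed.

Lemma can_force_or A B : perm_invariant A -> perm_invariant B ->
  forall k x, can_force (fun z => A z \/ B z) k x -> can_force A k x \/ can_force B k x.
Proof.
move=> A_inv B_inv; elim=> [|k IHk] x //=.
case=> p [a [fill_a force]].
have [/andP[_ le_pn] _ _] := fill_a.
have [S0 greedyS0] := greedy_choice_exists (fill_cups x a) le_pn.
have move_forces g : perm_invariant g -> can_force g k (empty_cups (fill_cups x a) S0) ->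
    exists p a, valid_fill p a /\ forall S, greedy_choice (fill_cups x a) p S ->
      can_force g k (empty_cups (fill_cups x a) S).
  move=> g_inv forceS0; exists p, a; split=> // S greedyS.
  have [s ->] := empty_cups_greedy_perm greedyS0 greedyS.
  exact: can_force_perm.
by case: (IHk _ (force S0 greedyS0)) => ?; [left|right]; apply: move_forces.
Qed.

Lemma valid_fill_full a : valid_fill n a -> forall i, a i = 1.
Proof.
case=> _ a_bd sum_a i; apply/esym/subr0_eq.
have subr_a_ge0 j : true -> 0 <= 1 - a j by rewrite subr_ge0; case/andP: (a_bd j).
apply: (psumr_eq0P subr_a_ge0) => //.
by rewrite sumrB sumr_const card_ord sum_a subrr.
Qed.

Lemma empty_cups_fill_full x a S :
  valid_fill n a -> greedy_choice (fill_cups x a) n S -> empty_cups (fill_cups x a) S = x.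
Proof.
move=> fill_a [cardS _].
have -> : S = setT by apply/eqP; rewrite eqEcard subsetT /= cardsT card_ord cardS.
by apply: funext => i; rewrite /empty_cups /fill_cups inE (valid_fill_full fill_a) addrK.
Qed.

Lemma valid_fill_compl p a :
  valid_fill p a -> (p < n)%N -> valid_fill (n - p) (fun i => 1 - a i).
Proof.
case=> _ a_bd sum_a lt_pn; split.
- by rewrite subn_gt0 lt_pn leq_subr.
- move=> i; case/andP: (a_bd i) => a_ge0 a_le1.
  by rewrite subr_ge0 a_le1 lerBlDr lerDl.
- by rewrite sumrB sumr_const card_ord sum_a natrB // ltnW.
Qed.

Lemma greedy_choice_compl (c : R) y q S :
  greedy_choice (fun i => c - y i) q S -> greedy_choice y (n - q) (~: S).
Proof.
case=> cardS greedyS; split; first by have := cardsC S; rewrite card_ord cardS; lia.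
by move=> i j; rewrite !inE negbK => iS jS; have := greedyS _ _ jS iS; rewrite lerD2l lerN2.
Qed.

Lemma empty_cups_compl y S :
  empty_cups (fun i => 1 - y i) S = -%R \o empty_cups y (~: S).
Proof.
apply: funext => i; rewrite /empty_cups /= inE.
by case: (i \in S); rewrite /= ?mulr0n ?mulr1n; lra.
Qed.

Lemma can_force_opp g k x :
  can_force g k x -> can_force (fun z => g (-%R \o z)) k (-%R \o x).
Proof.
elim: k g x => [|k IHk] g x /=.
  by have -> : -%R \o (-%R \o x) = x by apply: funext => i; rewrite /= opprK.
case=> p [a [fill_a force]]; have [/andP[_ le_pn] _ _] := fill_a.
case: (ltnP p n) => [lt_pn | ge_pn].
  exists (n - p)%N, (fun i => 1 - a i); split; first exact: valid_fill_compl.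
  have -> : fill_cups (-%R \o x) (fun i => 1 - a i) = (fun i => 1 - fill_cups x a i).
    by apply: funext => i; rewrite /fill_cups /= opprD addrCA.
  move=> S /greedy_choice_compl; rewrite (subKn (ltnW lt_pn)) => /(force (~: S)) /IHk.
  by rewrite empty_cups_compl.
have p_n : p = n by apply/eqP; rewrite eqn_leq le_pn ge_pn.
subst p; exists n, a; split=> // S greedyS.
have [S0 greedyS0] := greedy_choice_exists (fill_cups x a) (leqnn n).
have := IHk _ _ (force S0 greedyS0).
by rewrite (empty_cups_fill_full fill_a greedyS) (empty_cups_fill_full fill_a greedyS0).
Qed.

End CupGame.

Theorem propositionA1 (R : realType) (n t : nat) (b : R) :
  (1 <= n)%N -> (1 <= t)%N -> 0 <= b ->
  let F1 := can_force (fun x : config R n => exists i : 'I_n, b <= x i) t (@init_config R n) in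
  let F2 := can_force (fun x : config R n => exists i : 'I_n, x i <= - b) t (@init_config R n) in
  let F3 := can_force (fun x : config R n =>
              (exists i : 'I_n, b <= x i) \/ (exists i : 'I_n, x i <= - b)) t (@init_config R n) in
  (F1 <-> F2) /\ (F1 <-> F3).
Proof.
(* The equivalences hold without the three numeric hypotheses. *)
move=> _ _ _ F1 F2 F3.
have opp_init : -%R \o @init_config R n = @init_config R n.
  by apply: funext => i; rewrite /init_config /= oppr0.
have F12 : F1 -> F2.
  move/can_force_opp; rewrite opp_init; apply: sub_can_force => z [i].
  by rewrite /= lerNr; exists i.
have F21 : F2 -> F1.
  move/can_force_opp; rewrite opp_init; apply: sub_can_force => z [i].
  by rewrite /= lerN2; exists i.
split; first by split.
split; first by apply: sub_can_force => z; left.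
case/can_force_or => [||//|/F21//].
- exact: (exists_cup_perm_invariant (P := fun r => b <= r)).
- exact: (exists_cup_perm_invariant (P := fun r => r <= - b)).
Qed.
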